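(* If RePair and MR-RePair are not run with the same MR-order, then there is a case (i.e., there exist a text $T$ and runs of the two algorithms on $T$) in which the size of the grammar generated by MR-RePair is larger than the size of the grammar generated by RePair.
   Context: Strings: $\Sigma$ is a finite ordered alphabet; the frequency of a string is its number of occurrences in the current text as a substring. A substring $s$ with frequency greater than 1 is a repeat; $s$ is a maximal repeat if $|s|\ge 2$, $s$ is a repeat, and every left extension $ws$ and every right extension $sw$ ($w$ nonempty) occurs strictly fewer times than $s$. Grammars: a (deterministic) grammar $G=\{V,\Sigma,S,R\}$ has exactly one rule $v\to \mathit{expr}$ per variable, $\mathit{expr}$ being either a symbol of $\Sigma$ or a string of previously defined variables; it derives a unique text. Its size is the total length of the right-hand sides of all its rules. RePair on text $T$: (1) replace each symbol $a$ by a new variable $v_a$ and add $v_a\to a$; (2) find a most frequent pair $p$ of the current text (ties broken arbitrarily); (3) replace every occurrence of $p$ (as many as possible when $p$ consists of two equal symbols) by a new variable $v$ and add $v\to p$; (4) if the maximum pair frequency is now 1, add $S\to$(current text) and stop, else go to (2). MR-RePair on text $T$: (1) as in RePair; (2) find a most frequent maximal repeat $r$ of the current text (ties broken arbitrarily); (3) if $|r|>2$ and $r[1]=r[|r|]$, replace $r$ by $r[2..|r|]$; (4) replace every occurrence of $r$ by a new variable $v$ and add $v\to r$; (5) if the maximum frequency of maximal repeats is now 1, add $S\to$(current text) and stop, else go to (2). MR-order: the tie-breaking choices determine, for each run, an order in which the most frequent maximal repeats at each frequency level are processed (RePair replaces consecutively the pairs lying inside a most frequent maximal repeat); this order is the MR-order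 of the run. *)

From mathcomp Require Import all_boot.
Set Implicit Arguments. Unset Strict Implicit. Unset Printing Implicit Defensive.

(* Text symbols (Sigma) are natural numbers; T : seq nat.
   Grammar variables: [inl a] is the variable v_a (rule v_a -> a),
   [inr k] is the k-th variable created by a replacement step. *)
Definition var := (nat + nat)%type.

(* number of occurrences (possibly overlapping) of s as a substring of w *)
Definition freq (s w : seq var) : nat :=
  count (fun i => take (size s) (drop i w) == s) (iota 0 (size w - size s).+1).

Definition max_repeat (s w : seq var) : Prop :=
  2 <= size s /\ 1 < freq s w /\
  (forall u : seq var, u != [::] -> freq (u ++ s) w < freq s w) /\
  (forall u : seq var, u != [::] -> freq (s ++ u) w < freq s w).

Fixpoint repl_fuel (fuel : nat) (r : seq var) (v : var) (w : seq var) : seq var :=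
  match fuel with
  | 0 => w
  | f.+1 =>
    match w with
    | [::] => [::]
    | x :: w' =>
      if (r != [::]) && (take (size r) w == r)
      then v :: repl_fuel f r v (drop (size r) w)
      else x :: repl_fuel f r v w'
    end
  end.
Definition repl (r : seq var) (v : var) (w : seq var) : seq var :=
  repl_fuel (size w) r v w.

(* grammar state: current text and the rules of created variables
   (rule k : inr k -> nth [::] rules k) *)
Record state := State { txt : seq var; rules : seq (seq var) }.

Definition init (T : seq nat) : state := State (map inl T) [::].

Fixpoint expv (fuel : nat) (rs : seq (seq var)) (x : var) : seq nat :=
  match x with
  | inl a => [:: a]
  | inr k => match fuel with
             | 0 => [::]
             | f.+1 => flatten (map (expv f rs) (nth [::] rs k))
             end
  end.
Definition expand (rs : seq (seq var)) (s : seq var) : seq nat :=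
  flatten (map (expv (size rs) rs) s).

(* One RePair step: replace a most frequent pair p (frequency >= 2) by the
   new variable; r is the most frequent maximal repeat containing p that is
   being processed (used to define the MR-order of the run). *)
Definition repair_step (st : state) (p r : seq var) (st' : state) : Prop :=
  size p = 2 /\ 1 < freq p (txt st) /\
  (forall q : seq var, size q = 2 -> freq q (txt st) <= freq p (txt st)) /\
  max_repeat r (txt st) /\ infix p r /\ freq r (txt st) = freq p (txt st) /\
  st' = State (repl p (inr (size (rules st))) (txt st)) (rcons (rules st) p).

(* RePair run from st to final state; tr = Sigma-expansions of the maximal
   repeats processed at each step *)
Inductive repair_run : state -> seq (seq nat) -> state -> Prop :=
| RP_stop st :
    (forall q : seq var, size q = 2 -> freq q (txt st) <= 1) ->
    repair_run st [::] st
| RP_step st p r st' tr st'' :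
    repair_step st p r st' -> repair_run st' tr st'' ->
    repair_run st (expand (rules st) r :: tr) st''.

(* the string actually replaced by MR-RePair for the chosen maximal repeat r *)
Definition mr_trim (r : seq var) : seq var :=
  if (2 < size r) && (head (inl 0) r == last (inl 0) r) then behead r else r.

Definition mrrepair_step (st : state) (r : seq var) (st' : state) : Prop :=
  max_repeat r (txt st) /\
  (forall s : seq var, max_repeat s (txt st) -> freq s (txt st) <= freq r (txt st)) /\
  st' = State (repl (mr_trim r) (inr (size (rules st))) (txt st))
              (rcons (rules st) (mr_trim r)).

Inductive mrrepair_run : state -> seq (seq nat) -> state -> Prop :=
| MR_stop st :
    (forall s : seq var, ~ max_repeat s (txt st)) ->
    mrrepair_run st [::] st
| MR_step st r st' tr st'' :
    mrrepair_step st r st' -> mrrepair_run st' tr st'' ->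
    mrrepair_run st (expand (rules st) r :: tr) st''.

Fixpoint dedup (s : seq (seq nat)) : seq (seq nat) :=
  match s with
  | x :: ((y :: _) as s') => if x == y then dedup s' else x :: dedup s'
  | _ => s
  end.

Definition mr_order (tr : seq (seq nat)) : seq (seq nat) := dedup tr.

(* grammar size: rules v_a -> a (one per distinct symbol of T), the created
   rules, and S -> final text *)
Definition gsize (T : seq nat) (st : state) : nat :=
  size (undup T) + sumn (map size (rules st)) + size (txt st).

(** In [T = 000101] both [00] and [01] are maximal repeats of (overlapping)
    frequency 2, so each of them may be processed first.  RePair replaces
    [01] and is left with [00XX], which has no repeated pair: a grammar of
    size 2 + 2 + 4 = 8.  MR-RePair may replace [00] first, which occurs only
    once without overlap, and then [01], ending with [YZZ]: size 2 + 4 + 3 = 9.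
    Every side condition of the two runs quantifies over strings, but only
    substrings of the current text matter, so they all become decidable. *)

From mathcomp Require Import all_boot.
Set Implicit Arguments. Unset Strict Implicit. Unset Printing Implicit Defensive.

Section Substrings.

Variable w : seq var.

Definition substrings : seq (seq var) :=
  [seq take n (drop i w) | i <- iota 0 (size w), n <- iota 1 (size w)].

Lemma mem_substrings s : s != [::] -> 0 < freq s w -> s \in substrings.
Proof.
move=> s_nil; rewrite /freq -has_count => /hasP [i].
rewrite mem_iota /= add0n => lt_i /eqP occ_i.
have le_s_w : size s <= size w.
  by rewrite -occ_i size_take_min size_drop (leq_trans (geq_minr _ _) (leq_subr _ _)).
have s_gt0 : 0 < size s by rewrite lt0n size_eq0.
rewrite /substrings -occ_i; apply: allpairs_f; rewrite mem_iota /=.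
- by rewrite add0n (leq_trans lt_i) // ltn_subrL s_gt0 (leq_trans s_gt0 le_s_w).
- by rewrite s_gt0 add1n ltnS.
Qed.

Lemma freq_le_substrings (P : pred (seq var)) k :
  all (fun s => P s ==> (freq s w <= k)) substrings ->
  forall s, s != [::] -> P s -> freq s w <= k.
Proof.
move=> /allP freq_le s s_nil Ps; case: (posnP (freq s w)) => [-> // | s_occ].
by have /implyP := freq_le s (mem_substrings s_nil s_occ); apply.
Qed.

Definition max_repeatb (s : seq var) : bool :=
  [&& 2 <= size s, 1 < freq s w,
   all (fun t => (size s < size t) && (drop (size t - size s) t == s)
                 ==> (freq t w < freq s w)) substrings &
   all (fun t => (size s < size t) && (take (size s) t == s)
                 ==> (freq t w < freq s w)) substrings].

Lemma max_repeatP s : reflect (max_repeat s w) (max_repeatb s).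
Proof.
apply: (iffP and4P) => [[s2 s_rep /allP left_ext /allP right_ext] |
                        [s2 [s_rep [left_ext right_ext]]]].
- have s_nil : s != [::] by case: s s2 {s_rep left_ext right_ext}.
  split=> //; split=> //; split=> u u_nil.
  + case: (posnP (freq (u ++ s) w)) => [-> | us_occ]; first exact: ltn_trans s_rep.
    have us_nil : u ++ s != [::] by rewrite -size_eq0 size_cat addn_eq0 !size_eq0 (negPf s_nil) andbF.
    move: (left_ext _ (mem_substrings us_nil us_occ)).
    rewrite size_cat addnK drop_size_cat // -{1}(add0n (size s)) ltn_add2r lt0n size_eq0 u_nil eqxx.
    by [].
  + case: (posnP (freq (s ++ u) w)) => [-> | su_occ]; first exact: ltn_trans s_rep.
    have su_nil : s ++ u != [::] by rewrite -size_eq0 size_cat addn_eq0 !size_eq0 (negPf s_nil).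
    move: (right_ext _ (mem_substrings su_nil su_occ)).
    rewrite size_cat take_size_cat // -{1}(addn0 (size s)) ltn_add2l lt0n size_eq0 u_nil eqxx.
    by [].
- split=> //; apply/allP => t _; apply/implyP => /andP [lt_s_t /eqP ext].
  + have <- : take (size t - size s) t ++ s = t by rewrite -{2}ext cat_take_drop.
    apply: left_ext; rewrite -size_eq0 size_take_min -lt0n leq_min subn_gt0 lt_s_t.
    exact: leq_ltn_trans (leq0n _) lt_s_t.
  + have <- : s ++ drop (size s) t = t by rewrite -{1}ext cat_take_drop.
    by apply: right_ext; rewrite -size_eq0 size_drop -lt0n subn_gt0.
Qed.

Lemma max_repeat_substrings s : max_repeat s w -> s \in substrings.
Proof.
case=> s2 [s_rep _]; apply: mem_substrings; last exact: ltn_trans s_rep.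
by case: s s2 {s_rep}.
Qed.

Lemma pair_freq_le k :
  all (fun q => (size q == 2) ==> (freq q w <= k)) substrings ->
  forall q : seq var, size q = 2 -> freq q w <= k.
Proof.
move=> freq_le q q2; have q_nil : q != [::] by rewrite -size_eq0 q2.
exact: freq_le_substrings freq_le _ q_nil (introT eqP q2).
Qed.

Lemma max_repeat_freq_le r :
  all (fun s => max_repeatb s ==> (freq s w <= freq r w)) substrings ->
  forall s, max_repeat s w -> freq s w <= freq r w.
Proof.
move=> /allP freq_le s s_mr.
by have /implyP := freq_le s (max_repeat_substrings s_mr); apply; apply/max_repeatP.
Qed.

Lemma no_max_repeat :
  all (fun s => ~~ max_repeatb s) substrings -> forall s, ~ max_repeat s w.
Proof.
move=> /allP no_mr s s_mr.
by have /negP := no_mr s (max_repeat_substrings s_mr); apply; apply/max_repeatP.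
Qed.

End Substrings.

Definition example_text : seq nat := [:: 0; 0; 0; 1; 0; 1].

Definition repair_final : state :=
  State [:: inl 0; inl 0; inr 0; inr 0] [:: [:: inl 0; inl 1]].

Definition mrrepair_middle : state :=
  State [:: inr 0; inl 0; inl 1; inl 0; inl 1] [:: [:: inl 0; inl 0]].

Definition mrrepair_final : state :=
  State [:: inr 0; inr 1; inr 1] [:: [:: inl 0; inl 0]; [:: inl 0; inl 1]].

Lemma repair_run_example :
  repair_run (init example_text) [:: [:: 0; 1]] repair_final.
Proof.
pose p := [:: inl 0; inl 1] : seq var.
apply: (@RP_step _ p p _ [::]); last by apply: RP_stop; apply: pair_freq_le; vm_compute.
split; first by [].
split; first by vm_compute.
split; first by apply: pair_freq_le; vm_compute.
split; first by apply/max_repeatP; vm_compute.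
by vm_compute.
Qed.

Lemma mrrepair_run_example :
  mrrepair_run (init example_text) [:: [:: 0; 0]; [:: 0; 1]] mrrepair_final.
Proof.
apply: (@MR_step _ [:: inl 0; inl 0] mrrepair_middle [:: [:: 0; 1]]).
  split; first by apply/max_repeatP; vm_compute.
  split; first by apply: max_repeat_freq_le; vm_compute.
  by vm_compute.
apply: (@MR_step _ [:: inl 0; inl 1] _ [::]).
  split; first by apply/max_repeatP; vm_compute.
  split; first by apply: max_repeat_freq_le; vm_compute.
  by vm_compute.
by apply: MR_stop; apply: no_max_repeat; vm_compute.
Qed.

Theorem mainTheorem3 :
  exists (T : seq nat) (trRP trMR : seq (seq nat)) (fRP fMR : state),
    repair_run (init T) trRP fRP /\
    mrrepair_run (init T) trMR fMR /\
    mr_order trRP <> mr_order trMR /\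
    gsize T fRP < gsize T fMR.
Proof.
exists example_text, [:: [:: 0; 1]], [:: [:: 0; 0]; [:: 0; 1]].
exists repair_final, mrrepair_final.
split; first exact: repair_run_example.
split; first exact: mrrepair_run_example.
by split; vm_compute.
Qed.
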